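(* Assume that the decision rule $\phi_n$ has pointwise asymptotic level for $H^{\mathcal{I}}_{0,S}$ for all minimally invariant sets $S$ and pointwise asymptotic power for all $S\subseteq[d]$ such that $S$ is not a superset of a minimally invariant set. Define $C:=2^d$, let $$\widehat{\mathcal{I}}:=\{S\subseteq[d]\mid \phi_n(S,\alpha C^{-1})=0\},\qquad \widehat{\mathcal{MI}}:=\{S\in\widehat{\mathcal{I}}\mid \forall S'\subsetneq S:\ S'\notin\widehat{\mathcal{I}}\},$$ and $\hat S_{\mathrm{IAS}}:=\bigcup_{S\in\widehat{\mathcal{MI}}}S$. Then $$\lim_{n\to\infty}\mathbb{P}(\hat S_{\mathrm{IAS}}\subseteq\mathrm{AN}_Y)\ \ge\ \lim_{n\to\infty}\mathbb{P}(\hat S_{\mathrm{IAS}}=S_{\mathrm{IAS}})\ \ge\ 1-\alpha.$$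
   Context: Data $\mathcal{D}_n$ are observations (not necessarily independent) from the distribution $\mathbb{P}$ of $(E,X,Y)$, $X=(X_1,\dots,X_d)$, generated by a structural causal model whose graph is a DAG, faithful to that DAG, with $E$ exogenous (no parents). $\mathrm{AN}_Y$ denotes the set of ancestors of $Y$ in the DAG (indices $j\in[d]$ identified with $X_j$). $S\subseteq[d]$ is invariant if $Y\perp\!\!\!\perp E\mid X_S$; $\mathcal{I}$ is the collection of invariant sets; $S$ is minimally invariant if $S\in\mathcal{I}$ and no proper subset of $S$ is in $\mathcal{I}$; $S_{\mathrm{IAS}}$ is the union of all minimally invariant sets (empty if there are none). $H^{\mathcal{I}}_{0,S}$ is the hypothesis $S\in\mathcal{I}$. A decision rule $\phi_n(S,\alpha)=\phi_n(S,\mathcal{D}_n,\alpha)\in\{0,1\}$ rejects $H^{\mathcal{I}}_{0,S}$ at level $\alpha$ when it equals $1$. Pointwise asymptotic level for $S$ means: for all $\alpha\in(0,1)$ and all distributions in the model class for which $S\in\mathcal{I}$, $\lim_{n}\mathbb{P}(\phi_n(S,\alpha)=1)\le\alpha$; pointwise asymptotic power for $S$ means: for all $\alpha\in(0,1)$ and all distributions in the model class for which $S\notin\mathcal{I}$, $\lim_n\mathbb{P}(\phi_n(S,\alpha)=1)=1$. *)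

From HB Require Import structures.
From mathcomp Require Import all_boot all_order all_algebra.
From mathcomp Require Import all_classical all_reals all_analysis.
Set Implicit Arguments. Unset Strict Implicit. Unset Printing Implicit Defensive.
Import Order.TTheory GRing.Theory Num.Theory.
Local Open Scope classical_set_scope.
Local Open Scope ring_scope.

(* Nodes of the causal graph over (E, X_1..X_d, Y): type 'I_d.+2 with
   E = 0, X_j = j+1 (j : 'I_d, 0-based), Y = d+1. *)
Definition node (d : nat) := 'I_d.+2.
Definition nodeE (d : nat) : node d := ord0.
Definition nodeY (d : nat) : node d := ord_max.
Definition nodeX (d : nat) (j : 'I_d) : node d := lift ord0 (widen_ord (leqnSn d) j).

(* G u v == there is a directed edge u -> v. *)
Definition is_DAG (d : nat) (G : rel (node d)) : Prop :=
  forall u v, G u v -> ~~ connect G v u.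

Definition exogenousE (d : nat) (G : rel (node d)) : Prop :=
  forall v, ~~ G v (nodeE d).

Definition AN_Y (d : nat) (G : rel (node d)) : {set 'I_d} :=
  [set j : 'I_d | connect G (nodeX j) (nodeY d)].

Definition d_connecting_path (d : nat) (G : rel (node d)) (a b : node d)
  (Z : {set node d}) (p : seq (node d)) : Prop :=
  let s := a :: p in
  [/\ last a p = b, uniq s, path (fun u v => G u v || G v u) a p &
   forall i : nat, (0 < i)%N -> (i.+1 < size s)%N ->
     let u := nth a s i.-1 in let w := nth a s i in let v := nth a s i.+1 in
     if G u w && G v w
     then (exists2 z, z \in Z & connect G w z)
     else w \notin Z].

Definition d_separated (d : nat) (G : rel (node d)) (a b : node d)
  (Z : {set node d}) : Prop :=
  ~ exists p, d_connecting_path G a b Z p.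

Section CI.
Context {R : realType} {dO : measure_display} {Omega : measurableType dO}.

Definition sigma_gen (d : nat) (V : node d -> Omega -> R) (J : {set node d})
  : set (set Omega) :=
  <<s [set A | exists j, exists2 B : set R,
          j \in J /\ measurable B & A = V j @^-1` B] >>.

(* Conditional independence  V a _||_ V b | (V z)_{z in Z}:
   for every Borel A, P(V a \in A | V b, V_Z) admits a sigma(V_Z)-measurable
   version (with values in [0,1]). *)
Definition cond_indep (P : probability Omega R) (d : nat)
  (V : node d -> Omega -> R) (a b : node d) (Z : {set node d}) : Prop :=
  forall A : set R, measurable A ->
  exists psi : Omega -> R,
    [/\ forall B : set R, measurable B -> sigma_gen V Z (psi @^-1` B),
        forall w, 0 <= psi w <= 1 &
        forall C, sigma_gen V (b |: Z) C ->
          P (C `&` V a @^-1` A) = (\int[P]_(w in C) (psi w)%:E)%E].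

Definition invariant (P : probability Omega R) (d : nat)
  (V : node d -> Omega -> R) (S : {set 'I_d}) : Prop :=
  cond_indep P V (nodeY d) (nodeE d) ((@nodeX d) @: S).

Definition min_invariant (P : probability Omega R) (d : nat)
  (V : node d -> Omega -> R) (S : {set 'I_d}) : Prop :=
  invariant P V S /\ forall S' : {set 'I_d}, S' \proper S -> ~ invariant P V S'.

Definition S_IAS (P : probability Omega R) (d : nat)
  (V : node d -> Omega -> R) : {set 'I_d} :=
  [set j : 'I_d | `[< exists S, min_invariant P V S /\ j \in S >]].

Definition markov_wrt (P : probability Omega R) (d : nat)
  (V : node d -> Omega -> R) (G : rel (node d)) : Prop :=
  forall (a b : node d) (Z : {set node d}), a != b -> a \notin Z -> b \notin Z ->
    d_separated G a b Z -> cond_indep P V a b Z.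

Definition faithful_wrt (P : probability Omega R) (d : nat)
  (V : node d -> Omega -> R) (G : rel (node d)) : Prop :=
  forall (a b : node d) (Z : {set node d}), a != b -> a \notin Z -> b \notin Z ->
    cond_indep P V a b Z -> d_separated G a b Z.
End CI.

Section Est.
Context {R : realType} {dO : measure_display} {Omega : measurableType dO}.
Variable d : nat.
(* phi n S a w == phi_n(S, D_n(w), a) = 1, i.e. H_{0,S} rejected at level a. *)
Variable phi : nat -> {set 'I_d} -> R -> Omega -> bool.

Definition I_hat (n : nat) (alpha : R) (w : Omega) : {set {set 'I_d}} :=
  [set S : {set 'I_d} | ~~ phi n S (alpha / (2 ^+ d)%:R) w].

Definition MI_hat (n : nat) (alpha : R) (w : Omega) : {set {set 'I_d}} :=
  [set S in I_hat n alpha w |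
     [forall S' : {set 'I_d}, (S' \proper S) ==> (S' \notin I_hat n alpha w)]].

Definition S_IAS_hat (n : nat) (alpha : R) (w : Omega) : {set 'I_d} :=
  \bigcup_(S in MI_hat n alpha w) S.
End Est.

(* Markov property and faithfulness force every minimally invariant set S into
   AN_Y: invariance of S means that X_S d-separates Y from E, and a path that
   d-connects Y and E given X_(S ∩ AN_Y) visits only ancestors of Y or of E (the
   latter being E itself, which has no parents), so it would also d-connect them
   given X_S; hence S ∩ AN_Y is invariant and equals S by minimality.
   Statistically, the minimal accepted sets are exactly the minimally invariant
   ones as soon as no minimally invariant set is rejected and every set
   containing none of them is rejected.  Each of the 2^d tests at level
   alpha / 2^d errs with asymptotic probability at most alpha / 2^d, and a union
   bound concludes. *)

From Pilot Require Import Defs.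
From HB Require Import structures.
From mathcomp Require Import all_boot all_order all_algebra.
From mathcomp Require Import all_classical all_reals all_analysis.
From mathcomp Require Import zify lra.

Set Implicit Arguments.
Unset Strict Implicit.
Unset Printing Implicit Defensive.

Import Order.TTheory GRing.Theory Num.Theory.
Local Open Scope classical_set_scope.

Section AncestralSet.
Context {d : nat} {G : rel (node d)} {A : pred (node d)}.
Hypothesis parent_closed : forall x y, G x y -> A y -> A x.

Lemma connect_parent_closed x y : connect G x y -> A y -> A x.
Proof.
move=> /connectP [q]; elim: q x => [|z q IH] x /=; first by move=> _ ->.
by case/andP=> Gxz zq ylast Ay; apply: parent_closed Gxz (IH _ zq ylast Ay).
Qed.

Context {a b : node d} {Z : {set node d}} {p : seq (node d)}.
Hypotheses (Aa : A a) (Ab : A b) (AZ : {subset Z <= A}).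
Hypothesis conn : d_connecting_path G a b Z p.

Local Notation s := (a :: p).
Local Notation pnode i := (nth a (a :: p) i).

Lemma path_adjacent k : (k.+1 < size s)%N ->
  G (pnode k) (pnode k.+1) || G (pnode k.+1) (pnode k).
Proof. by case: conn => _ _ /(pathP a) adj _; apply: adj. Qed.

Lemma path_interior_ancestral k : (k.+2 < size s)%N ->
  A (pnode k.+1) \/ ~~ (G (pnode k) (pnode k.+1) && G (pnode k.+2) (pnode k.+1)).
Proof.
case: conn => _ _ _ /(_ k.+1 isT) /[apply] /=; case: ifP => [_ [z /AZ Az kz]|_ _].
  by left; apply: connect_parent_closed Az.
by right.
Qed.

(* Follow the path in the direction of its edges: the walk ends at an
   endpoint or at a collider, both of which lie in [A]. *)
Lemma path_out_edge_right_ancestral k : (k.+1 < size s)%N ->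
  G (pnode k) (pnode k.+1) -> A (pnode k).
Proof.
move Em : (size s - k.+2)%N => m; elim: m k Em => [|m IH] k Em ks Gk;
  apply: (parent_closed Gk).
  have -> : k.+1 = (size s).-1 by lia.
  by rewrite nth_last /=; case: conn => ->.
have ks' : (k.+2 < size s)%N by lia.
have [//|] := path_interior_ancestral ks'; rewrite Gk /= => nGk.
by apply: (IH k.+1); [lia | | move: (path_adjacent ks'); rewrite (negbTE nGk) orbF].
Qed.

Lemma path_out_edge_left_ancestral k : (k.+1 < size s)%N ->
  G (pnode k.+1) (pnode k) -> A (pnode k.+1).
Proof.
elim: k => [|k IH] ks Gk; apply: (parent_closed Gk); first exact: Aa.
have [//|] := path_interior_ancestral ks; rewrite Gk andbT => nGk.
by apply: IH; [lia | move: (path_adjacent (ltnW ks)); rewrite (negbTE nGk)].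
Qed.

Lemma d_connecting_path_ancestral : {subset s <= A}.
Proof.
move=> _ /(nthP a) [k ks <-]; have {}ks : (k < size s)%N := ks.
case: k ks => [//|k] ks.
have [lastk | interior] := eqVneq k.+1 (size s).-1.
  by rewrite lastk nth_last /=; case: conn => ->.
have ks' : (k.+2 < size s)%N by move/eqP: interior; lia.
have [//|] := path_interior_ancestral ks'; rewrite negb_and => /orP [] nG.
  apply: (path_out_edge_left_ancestral ks).
  by move: (path_adjacent ks); rewrite (negbTE nG).
apply: (path_out_edge_right_ancestral ks').
by move: (path_adjacent ks'); rewrite (negbTE nG) orbF.
Qed.

Lemma d_connecting_path_superset {Z' : {set node d}} :
  Z \subset Z' -> (forall z, A z -> z \in Z' -> z \in Z) ->
  d_connecting_path G a b Z' p.
Proof.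
move=> /fintype.subsetP ZZ' Z'Z; case: conn => p_last p_uniq p_path colliders.
split=> // k k0 ks; move: (colliders k k0 ks) => /=; case: ifP => _.
  by case=> z /ZZ' Z'z kz; exists z.
apply: contra => /(Z'Z _ _) -> //; apply: d_connecting_path_ancestral.
exact/mem_nth/ltnW.
Qed.

End AncestralSet.

Lemma d_separated_ancestral_subset d (G : rel (node d)) (A : pred (node d))
    (a b : node d) (Z Z' : {set node d}) :
  (forall x y, G x y -> A y -> A x) -> A a -> A b -> {subset Z <= A} ->
  Z \subset Z' -> (forall z, A z -> z \in Z' -> z \in Z) ->
  d_separated G a b Z' -> d_separated G a b Z.
Proof.
move=> parentA Aa Ab AZ ZZ' Z'Z sepZ' [p conn]; apply: sepZ'; exists p.
exact: (d_connecting_path_superset parentA Aa Ab AZ conn ZZ' Z'Z).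
Qed.

Lemma nodeY_neq_nodeE d : nodeY d != nodeE d.
Proof. by []. Qed.

Lemma nodeX_neq_nodeE d (j : 'I_d) : nodeX j != nodeE d.
Proof. by rewrite eq_sym; exact: neq_lift. Qed.

Lemma nodeY_notin_nodeX d (S : {set 'I_d}) : nodeY d \notin (@nodeX d) @: S.
Proof.
apply/imsetP => -[j _ /(congr1 val)]; rewrite /= /bump /=.
by have := ltn_ord j; lia.
Qed.

Lemma nodeE_notin_nodeX d (S : {set 'I_d}) : nodeE d \notin (@nodeX d) @: S.
Proof.
by apply/imsetP => -[j _ /eqP]; rewrite eq_sym (negbTE (nodeX_neq_nodeE j)).
Qed.

Lemma connect_exogenousE d (G : rel (node d)) x :
  exogenousE G -> connect G x (nodeE d) -> x = nodeE d.
Proof.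
move=> exoE /connectP [p]; case/lastP: p => [//|q z].
by rewrite rcons_path last_rcons => /andP [_] + zE; rewrite -zE (negbTE (exoE _)).
Qed.

Lemma invariant_setI_AN_Y (R : realType) d0 (Omega0 : measurableType d0)
    (P : probability Omega0 R) d (V : node d -> Omega0 -> R) (G : rel (node d))
    (S : {set 'I_d}) :
  exogenousE G -> markov_wrt P V G -> faithful_wrt P V G ->
  Defs.invariant P V S -> Defs.invariant P V (S :&: AN_Y G).
Proof.
move=> exoE markov faithful invS.
pose A := [pred x | connect G x (nodeY d) || connect G x (nodeE d)].
apply: markov; [exact: nodeY_neq_nodeE | exact: nodeY_notin_nodeX |
                exact: nodeE_notin_nodeX |].
apply: (@d_separated_ancestral_subset _ _ A _ _ _ ((@nodeX d) @: S)).
- by move=> x y Gxy /orP [] yA; apply/orP; [left | right];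
    apply: connect_trans (connect1 Gxy) yA.
- by rewrite inE connect0.
- by rewrite inE connect0 orbT.
- by move=> x /imsetP [j]; rewrite !inE => /andP [_ XjY] ->; rewrite XjY.
- by apply: imsetS; apply: subsetIl.
- move=> x /orP [xY | /connect_exogenousE xE] /imsetP [j Sj Xj]; subst x.
    by apply: imset_f; rewrite !inE Sj.
  by move: (nodeX_neq_nodeE j); rewrite xE.
- exact: faithful (nodeY_neq_nodeE d) (nodeY_notin_nodeX S) (nodeE_notin_nodeX S) invS.
Qed.

Lemma min_invariant_sub_AN_Y (R : realType) d0 (Omega0 : measurableType d0)
    (P : probability Omega0 R) d (V : node d -> Omega0 -> R) (G : rel (node d))
    (S : {set 'I_d}) :
  exogenousE G -> markov_wrt P V G -> faithful_wrt P V G ->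
  min_invariant P V S -> S \subset AN_Y G.
Proof.
move=> exoE markov faithful [invS minS].
have [<- | neqS] := eqVneq (S :&: AN_Y G) S; first exact: subsetIr.
exfalso; apply: (minS (S :&: AN_Y G)); last exact: invariant_setI_AN_Y.
by rewrite finset.properEneq neqS subsetIl.
Qed.

Lemma S_IAS_sub_AN_Y (R : realType) d0 (Omega0 : measurableType d0)
    (P : probability Omega0 R) d (V : node d -> Omega0 -> R) (G : rel (node d)) :
  exogenousE G -> markov_wrt P V G -> faithful_wrt P V G ->
  S_IAS P V \subset AN_Y G.
Proof.
move=> exoE markov faithful; apply/fintype.subsetP => j.
rewrite inE => /asboolP [S [minS Sj]].
exact: fintype.subsetP (min_invariant_sub_AN_Y exoE markov faithful minS) _ Sj.
Qed.

Definition minimal_members (T : finType) (J : {set {set T}}) : {set {set T}} :=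
  [set S in J | [forall S' : {set T}, (S' \proper S) ==> (S' \notin J)]]%SET.

Section MinimalMembers.
Variables (T : finType) (M : {set T} -> Prop) (J : {set {set T}}).
Hypothesis M_antichain : forall S S0, M S -> M S0 -> ~ S0 \proper S.
Hypothesis M_sub_J : forall S, M S -> S \in J.
Hypothesis J_above_M : forall S, S \in J -> exists2 S0, M S0 & S0 \subset S.

Lemma minimal_membersP S : S \in minimal_members J <-> M S.
Proof.
rewrite inE; split.
  case/andP=> JS /forallP minS; have [S0 MS0 S0S] := J_above_M JS.
  have [<- // | neqS0] := eqVneq S0 S.
  by move: (minS S0); rewrite finset.properEneq neqS0 S0S (M_sub_J MS0).
move=> MS; rewrite M_sub_J //=; apply/forallP => S'; apply/implyP => S'S.
apply/negP => /J_above_M [S0 MS0 S0S']; apply: (M_antichain MS MS0).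
exact: sub_proper_trans S0S' S'S.
Qed.

Lemma bigcup_minimal_members :
  (\bigcup_(S in minimal_members J) S = [set x | `[< exists S, M S /\ x \in S >]])%SET.
Proof.
apply/setP => x; rewrite inE; apply/bigcupP/asboolP.
  by case=> S /minimal_membersP MS xS; exists S.
by case=> S [MS xS]; exists S => //; apply/minimal_membersP.
Qed.

End MinimalMembers.

Local Open Scope ring_scope.

Lemma card_sets (T : finType) : #|{set T}| = (2 ^ #|T|)%N.
Proof.
rewrite -cardsT -card_powerset; apply: eq_card => A.
by rewrite powersetE finset.subsetT.
Qed.

Section LimnEinfEsup.
Context {R : realType}.
Local Open Scope ereal_scope.
Implicit Types (u v : (\bar R)^nat) (x : \bar R).

Lemma limn_einf_ge_near u x : (\forall n \near \oo, x <= u n) -> x <= limn_einf u.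
Proof.
move=> [N _ xu]; rewrite limn_einf_lim; apply: lime_ge; first exact: is_cvg_einfs.
exists N => // n /= Nn; apply: le_ereal_inf_tmp => _ [m /= nm <-].
exact/xu/(leq_trans Nn).
Qed.

Lemma le_limn_einf u v : (forall n, u n <= v n) -> limn_einf u <= limn_einf v.
Proof.
move=> uv; rewrite !limn_einf_lim; apply: lee_lim; try exact: is_cvg_einfs.
apply: nearW => n; apply: le_ereal_inf_tmp => _ [m /= nm <-].
by apply: le_trans (uv m); apply: ereal_inf_lbound; exists m.
Qed.

Lemma limn_esup_lt_near u x : limn_esup u < x -> \forall n \near \oo, u n < x.
Proof.
rewrite limn_esup_lim (cvg_lim _ (@cvg_esups_inf R u)) //.
case/ereal_inf_lt => _ [N _ <-] uNx; exists N => // n /= Nn.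
by apply: le_lt_trans uNx; apply: ereal_sup_ubound; exists n.
Qed.

End LimnEinfEsup.

Lemma le_mu_bigsetU_seq d (T : measurableType d) (R : realType)
    (mu : {measure set T -> \bar R}) (I : Type) (r : seq I) (F : I -> set T) :
  (forall i, measurable (F i)) ->
  (mu (\big[setU/set0]_(i <- r) F i) <= \sum_(i <- r) mu (F i))%E.
Proof.
move=> mF; elim: r => [|i r IH]; first by rewrite !big_nil measure0.
rewrite !big_cons; apply: le_trans (measureU2 mu (mF i) _) _.
  exact: bigsetU_measurable.
exact: leeD2l.
Qed.

(* [A] is the union of the atoms of the generating events that it meets. *)
Lemma measurable_finitely_determined d (T : measurableType d) (I : finType)
    (g : I -> T -> bool) (A : set T) :
  (forall i, measurable [set t | g i t]) ->
  (forall t t', (forall i, g i t = g i t') -> A t -> A t') -> measurable A.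
Proof.
move=> mg detA.
pose atoms := [set f : {ffun I -> bool} | exists2 t, A t & forall i, g i t = f i].
have -> : A = \bigcup_(f in atoms) \bigcap_(i in [set: I]) [set t | g i t = f i].
  apply/seteqP; split => [t At | t [f [t0 At0 t0f] tf]].
    exists [ffun i => g i t]; first by exists t => // i; rewrite ffunE.
    by move=> i _; rewrite /= ffunE.
  by apply: detA At0 => i; rewrite t0f tf.
apply: fin_bigcup_measurable; first exact: finite_finset.
move=> f _; apply: fin_bigcap_measurable; first exact: finite_finset.
move=> i _; case: (f i); first exact: mg.
rewrite (_ : [set t | g i t = false] = ~` [set t | g i t]); first exact/measurableC/mg.
by apply/seteqP; split => t /=; case: (g i t).
Qed.

Section BonferroniIAS.
Context {R : realType} {d : nat}.
Context {d0 : measure_display} {Omega0 : measurableType d0}.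
Variables (P : probability Omega0 R) (V : node d -> Omega0 -> R).
Context {d1 : measure_display} {Omega : measurableType d1}.
Variables (Q : probability Omega R) (phi : nat -> {set 'I_d} -> R -> Omega -> bool).
Variable alpha : R.
Hypothesis alpha01 : 0 < alpha < 1.

Local Notation level := (alpha / (2 ^+ d)%:R).
Local Notation no_min_invariant_subset S :=
  (~ (exists2 S0, min_invariant P V S0 & S0 \subset S)).

Hypothesis phi_measurable : forall n S a, measurable [set w | phi n S a w].
Hypothesis phi_level : forall S, min_invariant P V S -> forall a : R, 0 < a < 1 ->
  (limn_esup (fun n => Q [set w | phi n S a w]) <= a%:E)%E.
Hypothesis phi_power : forall S : {set 'I_d}, no_min_invariant_subset S ->
  forall a : R, 0 < a < 1 -> (fun n => Q [set w | phi n S a w]) @ \oo --> 1%E.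

Lemma card_sets_level : level *+ #|{set 'I_d}| = alpha.
Proof.
by rewrite -mulr_natr card_sets card_ord -natrXE divfK // pnatr_eq0 natrXE expn_eq0.
Qed.

Lemma level_gt0_lt1 : 0 < level < 1.
Proof.
case/andP: alpha01 => alpha_gt0 alpha_lt1.
have two_d_ge1 : 1 <= (2 ^+ d)%:R :> R by rewrite ler1n natrXE expn_gt0.
have two_d_gt0 := lt_le_trans ltr01 two_d_ge1.
by rewrite divr_gt0 //= ltr_pdivrMr // mul1r (lt_le_trans alpha_lt1).
Qed.

Lemma S_IAS_hat_eq_S_IAS n w :
  (forall S, min_invariant P V S -> ~~ phi n S level w) ->
  (forall S : {set 'I_d}, no_min_invariant_subset S -> phi n S level w) ->
  S_IAS_hat phi n alpha w = S_IAS P V.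
Proof.
move=> accept_min reject_nosub.
apply: (bigcup_minimal_members (M := min_invariant P V)).
- by move=> S S0 [_ minS] [invS0 _] /minS.
- by move=> S /accept_min; rewrite inE.
- move=> S; rewrite inE => acceptS.
  have [// | nosubS] := pselect (exists2 S0, min_invariant P V S0 & S0 \subset S).
  by rewrite reject_nosub in acceptS.
Qed.

(* Sets that neither are minimally invariant nor contain a minimally invariant
   set cannot affect [S_IAS_hat], so no error is charged to them. *)
Definition test_error n S : set Omega :=
  if pselect (min_invariant P V S) then [set w | phi n S level w]
  else if pselect (no_min_invariant_subset S) then ~` [set w | phi n S level w]
  else set0.

Lemma measurable_test_error n S : measurable (test_error n S).
Proof.
rewrite /test_error; case: pselect => /= _; first exact: phi_measurable.
by case: pselect => /= _; [exact/measurableC/phi_measurable | exact: measurable0].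
Qed.

Lemma S_IAS_hat_eq_S_IAS_off_errors n w :
  (forall S, ~ test_error n S w) -> S_IAS_hat phi n alpha w = S_IAS P V.
Proof.
move=> no_error; apply: S_IAS_hat_eq_S_IAS => S => [minS | nosubS];
  move: (no_error S); rewrite /test_error.
  by case: pselect => //= _ /negP.
case: pselect => /= [minS | _]; first by case: nosubS; exists S.
by case: pselect => //= _ /contrapT.
Qed.

Lemma test_error_near e : 0 < e ->
  \forall n \near \oo, forall S, (Q (test_error n S) <= (level + e)%:E)%E.
Proof.
move=> e_gt0; apply: filter_forall => S; rewrite /test_error.
case: pselect => /= [minS | _].
  have : (limn_esup (fun n => Q [set w | phi n S level w]) < (level + e)%:E)%E.
    by apply: le_lt_trans (phi_level minS level_gt0_lt1) _; rewrite lte_fin ltrDl.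
  by move/limn_esup_lt_near; apply: filterS => n /ltW.
case: pselect => /= [nosubS | _]; last first.
  apply: nearW => n; case/andP: level_gt0_lt1 => level_gt0 _.
  by rewrite measure0 lee_fin addr_ge0 // ltW.
have /fine_cvgP [fin_near cvg1] := phi_power nosubS level_gt0_lt1.
have ge1e := cvgr_ge 1 cvg1 (1 - e) ltac:(lra).
near=> n; rewrite probability_setC //.
have fin : Q [set w | phi n S level w] \is a fin_num by near: n.
have ge : 1 - e <= fine (Q [set w | phi n S level w]) by near: n.
rewrite -(fineK fin) -EFinB lee_fin; case/andP: level_gt0_lt1 => *; lra.
Unshelve. all: by end_near.
Qed.

Lemma measurable_S_IAS_hat n (F : {set 'I_d} -> Prop) :
  measurable [set w | F (S_IAS_hat phi n alpha w)].
Proof.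
apply: (@measurable_finitely_determined _ _ _ (fun S w => phi n S level w)).
  by move=> S; exact: phi_measurable.
move=> w w' same; rewrite /= /S_IAS_hat /MI_hat.
suff -> : I_hat phi n alpha w = I_hat phi n alpha w' by [].
by apply/setP => S; rewrite !inE same.
Qed.

(* Union bound over the 2^d tests, each erring with probability at most
   level + e / 2^d for large n. *)
Lemma S_IAS_hat_eq_near e : 0 < e -> \forall n \near \oo,
  ((1 - alpha)%:E - e%:E <= Q [set w | S_IAS_hat phi n alpha w == S_IAS P V])%E.
Proof.
move=> e_gt0.
have N_gt0 : 0 < #|{set 'I_d}|%:R :> R by rewrite ltr0n card_sets expn_gt0.
apply: filterS (test_error_near (divr_gt0 e_gt0 N_gt0)) => n small.
pose U := \big[setU/set0]_(S : {set 'I_d}) test_error n S.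
have mU : measurable U by apply: bigsetU_measurable => S _; exact: measurable_test_error.
have QU : (Q U <= (alpha + e)%:E)%E.
  apply: le_trans (le_mu_bigsetU_seq Q _ (measurable_test_error n)) _.
  apply: (@le_trans _ _ (\sum_(S : {set 'I_d}) (level + e / #|{set 'I_d}|%:R)%:E)%E).
    by apply: lee_sum => S _; exact: small.
  rewrite sumEFin sumr_const mulrnDl card_sets_level lee_fin.
  by rewrite -[e / _ *+ _]mulr_natr divfK // lt0r_neq0.
apply: le_trans (_ : (Q (~` U) <= _)%E).
  have QU_fin : Q U \is a fin_num by exact: fin_num_measure.
  by move: QU; rewrite probability_setC // -(fineK QU_fin) -!EFinB !lee_fin; lra.
apply: le_measure; rewrite ?inE; first exact: measurableC.
  exact: (measurable_S_IAS_hat n (fun X => X == S_IAS P V)).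
move=> w /= notUw; apply/eqP; apply: S_IAS_hat_eq_S_IAS_off_errors => S errS.
by apply: notUw; rewrite /U (bigD1 S) //=; left.
Qed.

Lemma S_IAS_hat_eq_limn_einf :
  ((1 - alpha)%:E <=
   limn_einf (fun n => Q [set w | S_IAS_hat phi n alpha w == S_IAS P V]))%E.
Proof. by apply/lee_subgt0Pr => e e_gt0; apply/limn_einf_ge_near/S_IAS_hat_eq_near. Qed.

End BonferroniIAS.

Theorem theorem2 (R : realType) (d : nat)
  (* population: distribution of (E, X, Y) *)
  (d0 : measure_display) (Omega0 : measurableType d0) (P : probability Omega0 R)
  (V : node d -> Omega0 -> R)
  (HV : forall v, measurable_fun setT (V v))
  (G : rel (node d)) (HG : is_DAG G) (HE : exogenousE G)
  (Hmarkov : markov_wrt P V G) (Hfaith : faithful_wrt P V G)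
  (* data and decision rule *)
  (d1 : measure_display) (Omega : measurableType d1) (Q : probability Omega R)
  (phi : nat -> {set 'I_d} -> R -> Omega -> bool)
  (Hphi : forall n S a, measurable [set w | phi n S a w])
  (Hlevel : forall S, min_invariant P V S -> forall a : R, 0 < a < 1 ->
     (limn_esup (fun n => Q [set w | phi n S a w]) <= a%:E)%E)
  (Hpower : forall S : {set 'I_d}, ~ (exists2 S0, min_invariant P V S0 & S0 \subset S) ->
     forall a : R, 0 < a < 1 ->
     (fun n => Q [set w | phi n S a w]) @ \oo --> 1%E)
  (alpha : R) (Halpha : 0 < alpha < 1) :
  (limn_einf (fun n => Q [set w | S_IAS_hat phi n alpha w \subset AN_Y G])
   >= limn_einf (fun n => Q [set w | S_IAS_hat phi n alpha w == S_IAS P V]))%E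
  /\
  (limn_einf (fun n => Q [set w | S_IAS_hat phi n alpha w == S_IAS P V])
   >= (1 - alpha)%:E)%E.
Proof.
split; last exact: S_IAS_hat_eq_limn_einf Halpha Hphi Hlevel Hpower.
apply: le_limn_einf => n; apply: le_measure; rewrite ?inE.
- exact: (measurable_S_IAS_hat alpha Hphi n (fun X => X == S_IAS P V)).
- exact: (measurable_S_IAS_hat alpha Hphi n (fun X => X \subset AN_Y G)).
- by move=> w /= /eqP ->; exact: S_IAS_sub_AN_Y.
Qed.
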